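(* Let $G$ be a connected graph with $n$ vertices and $k\ge1$. Let $B_k(G)$ be the sum of the spanning tree weights of all balanced connected $k$-partitions of $G$, and let $\tau_k(G)$ be the number of $k$-splittable spanning trees of $G$. Then $B_k(G)$ and $\tau_k(G)$ are within a factor $n^{2(k-1)}$ of each other, i.e. $n^{-2(k-1)}\tau_k(G)\le B_k(G)\le n^{2(k-1)}\tau_k(G)$.
   Context: A tree $T$ is $k$-splittable if there exist $k-1$ edges of $T$ whose removal leaves a forest whose $k$ connected components all have the same number of vertices. A connected $k$-partition of $G=(V,E)$ is a partition of $V$ into $k$ nonempty sets (pieces) each inducing a connected subgraph; it is balanced if all pieces have equal size. For a graph $H$, $\tau(H)$ is its number of spanning trees, and the spanning tree weight of a connected partition $P$ is $\prod_{S\in P}\tau(G[S])$. *)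

From mathcomp Require Import all_boot.
From mathcomp Require Import boolp.
Set Implicit Arguments. Unset Strict Implicit. Unset Printing Implicit Defensive.

Section Graphs.
Variable T : finType.

Definition simple_graph (e : rel T) : Prop := symmetric e /\ irreflexive e.

Definition graph_connected (e : rel T) : Prop := forall x y : T, connect e x y.

(* Edges are 2-element vertex sets; an edge set is a {set {set T}}. *)
Definition edge_in (e : rel T) (S : {set T}) (f : {set T}) : bool :=
  [exists x, exists y, [&& x \in S, y \in S, e x y & f == [set x; y]]].

Definition adjF (F : {set {set T}}) : rel T :=
  fun x y => (x != y) && ([set x; y] \in F).

Definition connected_on (F : {set {set T}}) (S : {set T}) : Prop :=
  forall x y, x \in S -> y \in S ->
    connect (fun a b => [&& a \in S, b \in S & adjF F a b]) x y.

Definition acyclic (F : {set {set T}}) : Prop :=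
  ~ exists s : seq T, [/\ 3 <= size s, uniq s & cycle (adjF F) s].

Definition spanning_tree (e : rel T) (S : {set T}) (F : {set {set T}}) : Prop :=
  [/\ {in F, forall f, edge_in e S f}, connected_on F S & acyclic F].

Definition tau (e : rel T) (S : {set T}) : nat :=
  #|[set F : {set {set T}} | `[< spanning_tree e S F >] ]|.

Definition components (F : {set {set T}}) : {set {set T}} :=
  equivalence_partition (fun x y => connect (adjF F) x y) [set: T].

Definition splittable (k : nat) (F : {set {set T}}) : Prop :=
  exists R : {set {set T}},
    [/\ R \subset F, #|R| = k.-1, #|components (F :\: R)| = k &
        forall A B, A \in components (F :\: R) -> B \in components (F :\: R) ->
          #|A| = #|B| ].

Definition balanced_connected_partition (e : rel T) (k : nat) (P : {set {set T}}) : Prop :=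
  [/\ partition P [set: T], #|P| = k,
      (forall S, S \in P -> connected_on [set f | edge_in e S f] S) &
      (forall A B, A \in P -> B \in P -> #|A| = #|B|)].

Definition Bk (e : rel T) (k : nat) : nat :=
  \sum_(P : {set {set T}} | `[< balanced_connected_partition e k P >])
     \prod_(S in P) tau e S.

Definition tauk (e : rel T) (k : nat) : nat :=
  #|[set F : {set {set T}} | `[< spanning_tree e [set: T] F /\ splittable k F >] ]|.

End Graphs.

From mathcomp Require Import all_boot.
From mathcomp Require Import boolp.
Set Implicit Arguments. Unset Strict Implicit. Unset Printing Implicit Defensive.

(* Call an edge set H a balanced forest if its components form a balanced
   connected k-partition P of G and H restricts to a spanning tree on every part.
   The balanced forests with partition P are exactly the unions of families of
   spanning trees of the parts, so B_k(G) is the number of balanced forests.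
   Deleting the k-1 splitting edges R of a k-splittable spanning tree F leaves
   the balanced forest F \ R; conversely, since G is connected, a balanced forest
   H (which has k components) extends by k-1 edges R to a spanning tree H u R,
   which is k-splittable through R.  So each of the two families is the image of
   the other times the (k-1)-sets of vertex pairs, and there are at most
   (n^2)^(k-1) such sets. *)

Section Paths.
Variable T : finType.

Lemma connect_invariant (r : rel T) (Q : T -> Prop) x y :
  (forall u v, r u v -> Q u -> Q v) -> Q x -> connect r x y -> Q y.
Proof.
move=> rQ + /connectP[p + ->]; elim: p x => [|z p IHp] x //= Qx /andP[rxz pz].
exact: IHp (rQ _ _ rxz Qx) pz.
Qed.

Lemma path_exit (r : rel T) (Q : pred T) x p :
  path r x p -> Q x -> ~~ Q (last x p) -> exists u v, [/\ r u v, Q u & ~~ Q v].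
Proof.
elim: p x => [|y p IHp] x /= => [_ -> // | /andP[rxy pyp] Qx nQp].
by have [Qy | nQy] := boolP (Q y); [apply: IHp Qy nQp | exists x, y].
Qed.

Lemma uniq_cycle_around (r : rel T) s a :
  3 <= size s -> uniq s -> cycle r s -> a \in s ->
  exists2 q, q != [::] &
    [/\ uniq (a :: next s a :: q), path r (next s a) q & r (last (next s a) q) a].
Proof.
move=> s3 us cs sa; set b := next s a.
have nb : next (rot (index a s) s) a = b by rewrite next_rot.
have : 3 <= size (rot (index a s) s) by rewrite size_rot.
have : uniq (rot (index a s) s) by rewrite rot_uniq.
have : cycle r (rot (index a s) s) by rewrite rot_cycle.
move: nb; rewrite rot_index //.
case: (drop _ _ ++ take _ _) => [|b' [|c q]] //=; rewrite /next /= eqxx => <-.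
rewrite rcons_path => /and3P[_ rb'c /andP[pcq rqa]] uq _.
by exists (c :: q); split; rewrite //= rb'c.
Qed.
End Paths.

Section EdgeSets.
Variable T : finType.
Implicit Types (F H R : {set {set T}}) (S : {set T}) (x y : T).

Lemma edge_inP (e : rel T) S f :
  reflect (exists x y, [/\ x \in S, y \in S, e x y & f = [set x; y]]) (edge_in e S f).
Proof.
apply: (iffP existsP) => [[x /existsP[y /and4P[Sx Sy exy /eqP ->]]] | ].
  by exists x, y.
move=> [x [y [Sx Sy exy ->]]].
by exists x; apply/existsP; exists y; rewrite Sx Sy exy eqxx.
Qed.

Lemma pair_subset (u v : T) S : u \in S -> v \in S -> [set u; v] \subset S.
Proof. by move=> Su Sv; apply/subsetP=> z; rewrite !inE => /orP[] /eqP->. Qed.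

Lemma edge_in_subset (e : rel T) S f : edge_in e S f -> f \subset S.
Proof. by case/edge_inP=> u [v [Su Sv _ ->]]; apply: pair_subset. Qed.

Lemma edge_in_trans (e : rel T) S S' f : edge_in e S f -> f \subset S' -> edge_in e S' f.
Proof.
case/edge_inP=> u [v [_ _ euv ->]] /subsetP sfS'; apply/edge_inP; exists u, v.
by rewrite !sfS' ?euv ?inE ?eqxx ?orbT.
Qed.

Lemma adjF_edge_in (e : rel T) S F u v :
  {in F, forall f, edge_in e S f} -> adjF F u v -> (u \in S) && (v \in S).
Proof.
move=> eF /andP[_ /eF /edge_in_subset /subsetP sS].
by rewrite !sS ?inE ?eqxx ?orbT.
Qed.

Lemma connect_within (r : rel T) H S x y :
  {in S &, subrel (adjF H) r} -> (forall z, connect (adjF H) x z -> z \in S) ->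
  connect (adjF H) x y -> connect r x y.
Proof.
move=> Hr cS /connectP[p xp ->]; apply/connectP; exists p => //.
apply: (sub_in_path Hr) (xp); apply/allP=> z /(path_connect xp); exact: cS.
Qed.

Lemma adjF_sym F : symmetric (adjF F).
Proof. by move=> x y; rewrite /adjF eq_sym setUC. Qed.

Lemma connect_adjF_sym F : connect_sym (adjF F).
Proof. exact: sym_connect_sym (adjF_sym F). Qed.

Lemma equivalence_connect_adjF F : equivalence_rel (connect (adjF F)).
Proof.
move=> x y z; split=> [|cxy]; first exact: connect0.
apply/idP/idP=> [cxz|]; last exact: connect_trans.
by apply: connect_trans cxz; rewrite connect_adjF_sym.
Qed.

Lemma partition_components F : partition (components F) [set: T].
Proof.
by apply: equivalence_partitionP => x y z _ _ _; apply: equivalence_connect_adjF.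
Qed.

Lemma trivIset_components F : trivIset (components F).
Proof. by case/and3P: (partition_components F). Qed.

Lemma mem_cover_components F x : x \in cover (components F).
Proof. by rewrite (cover_partition (partition_components F)) in_setT. Qed.

Lemma pblock_components F x : pblock (components F) x \in components F.
Proof. exact: pblock_mem (mem_cover_components F x). Qed.

Lemma mem_pblock_components F x y :
  (y \in pblock (components F) x) = connect (adjF F) x y.
Proof.
apply: pblock_equivalence_partition; rewrite ?in_setT //.
by move=> a b c _ _ _; apply: equivalence_connect_adjF.
Qed.

Lemma eq_pblock_components F x y :
  (pblock (components F) x == pblock (components F) y) = connect (adjF F) x y.
Proof.
by rewrite eq_pblock ?trivIset_components ?mem_cover_components ?mem_pblock_components.
Qed.

Lemma components_pblockE F S x :
  S \in components F -> x \in S -> S = pblock (components F) x.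
Proof. by move=> FS Sx; rewrite (def_pblock (trivIset_components F) FS Sx). Qed.

Lemma partition_pblockE (P : {set {set T}}) :
  partition P [set: T] -> P = [set pblock P z | z in [set: T]].
Proof.
case/and3P=> /eqP covP tI P0; apply/setP=> S; apply/idP/imsetP=> [PS|[z _ ->]].
  have /set0Pn[z Sz] : S != set0 by apply: contraNneq P0 => <-.
  by exists z; rewrite ?in_setT // (def_pblock tI PS Sz).
by apply: pblock_mem; rewrite covP in_setT.
Qed.


Lemma adjF_setU1 H x y u v :
  adjF ([set x; y] |: H) u v = (u != v) && ([set u; v] == [set x; y]) || adjF H u v.
Proof. by rewrite /adjF in_setU1 andb_orr. Qed.

Lemma mem_pair_eq (u v x y : T) :
  [set u; v] = [set x; y] -> (u \in [set x; y]) && (v \in [set x; y]).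
Proof. by move=> <-; rewrite !inE !eqxx orbT. Qed.

Lemma connect_adjF_setU1 H x y z w :
  connect (adjF ([set x; y] |: H)) z w =
  connect (adjF H) z w ||
  (connect (adjF H) x z || connect (adjF H) y z) &&
  (connect (adjF H) x w || connect (adjF H) y w).
Proof.
set H' := [set x; y] |: H.
have subH : subrel (connect (adjF H)) (connect (adjF H')).
  by apply: connect_sub => u v Huv; rewrite connect1 // adjF_setU1 Huv orbT.
have c'xy : connect (adjF H') x y.
  have [-> | nxy] := eqVneq x y; first exact: connect0.
  by rewrite connect1 // adjF_setU1 nxy eqxx.
have c'x v : connect (adjF H) x v || connect (adjF H) y v -> connect (adjF H') x v.
  by case/orP=> /subH; last apply: connect_trans.
apply/idP/idP=> [|/orP[/subH //|/andP[cz cw]]]; last first.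
  by apply: connect_trans (c'x _ cw); rewrite connect_adjF_sym c'x.
pose Q v := connect (adjF H) z v ||
  (connect (adjF H) x z || connect (adjF H) y z) &&
  (connect (adjF H) x v || connect (adjF H) y v).
apply: (connect_invariant (Q := Q)); last by rewrite /Q connect0.
move=> u v; rewrite adjF_setU1 /Q => /orP[/andP[_ /eqP uv] | Huv].
  have /andP[xyu xyv] := mem_pair_eq uv; rewrite !inE in xyu xyv.
  have -> : connect (adjF H) x v || connect (adjF H) y v.
    by case/orP: xyv => /eqP->; rewrite connect0 ?orbT.
  case/orP=> [czu | /andP[-> _]]; last by rewrite orbT.
  by case/orP: xyu => /eqP eu; rewrite -eu (connect_adjF_sym _ u z) czu ?orbT.
case/orP=> [czu | /andP[-> cu]]; first by rewrite (connect_trans czu (connect1 Huv)).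
by case/orP: cu => cu; rewrite (connect_trans cu (connect1 Huv)) ?orbT.
Qed.

Lemma acyclic_subset F F' : F' \subset F -> acyclic F -> acyclic F'.
Proof.
move=> sF'F acF [s [s3 us cs]]; apply: acF; exists s; split=> //.
by apply: sub_cycle cs => u v /andP[nuv uvF']; rewrite /adjF nuv (subsetP sF'F).
Qed.


Lemma acyclic_setU1 H x y :
  x != y -> ~~ connect (adjF H) x y -> acyclic H -> acyclic ([set x; y] |: H).
Proof.
move=> nxy ncxy acH [s [s3 us cs]].
have [a sa nHa] : exists2 a, a \in s & ~~ adjF H a (next s a).
  apply/allPn; apply: contra_notN acH => /allP Hs.
  by exists s; split=> //; apply: cycle_from_next.
set b := next s a in nHa.
have /andP[nab /eqP eab] : (a != b) && ([set a; b] == [set x; y]).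
  by move: (next_cycle cs sa); rewrite adjF_setU1 (negbTE nHa) orbF.
(* Apart from its edge ab = xy, the cycle is a path from b back to a in H. *)
have [q q0 [uq pq lq]] := uniq_cycle_around s3 us cs sa; rewrite -/b in uq pq lq.
have cq : last b q \in q by case: q q0 {uq pq lq} => //= c q _; rewrite mem_last.
move: uq; rewrite /= !inE negb_or => /and3P[/andP[_ aq] bq _].
have Hq : path (adjF H) b q.
  apply: (@sub_in_path _ (predC1 a) (adjF ([set x; y] |: H))) pq; last first.
    by rewrite /= eq_sym nab; apply/allP => v vq; apply: contraNneq aq => <-.
  move=> u v /= nua nva; rewrite adjF_setU1 -eab => /orP[/andP[nuv /eqP uvab] | //].
  have := mem_pair_eq uvab; rewrite !inE (negbTE nua) (negbTE nva) /=.
  by case/andP=> /eqP eub /eqP evb; rewrite eub evb eqxx in nuv.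
have Hca : adjF H (last b q) a.
  move: lq; rewrite adjF_setU1 -eab => /orP[/andP[_ /eqP cab] |//].
  have /andP[cinab _] := mem_pair_eq cab.
  move: cinab; rewrite !inE => /orP[] /eqP ec.
    by rewrite -ec cq in aq.
  by rewrite -ec cq in bq.
have cba : connect (adjF H) b a.
  by apply: connect_trans _ (connect1 Hca); apply/connectP; exists q.
have cab u v : u \in [set a; b] -> v \in [set a; b] -> connect (adjF H) u v.
  rewrite !inE => /orP[] /eqP-> /orP[] /eqP->; rewrite ?connect0 //.
  by rewrite connect_adjF_sym.
by case/negP: ncxy; apply: cab; rewrite eab !inE eqxx ?orbT.
Qed.

Definition merge_blocks (A B C : {set T}) : {set T} :=
  if (C == A) || (C == B) then A :|: B else C.

Lemma card_merge_blocks (P : {set {set T}}) A B :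
  trivIset P -> set0 \notin P -> A \in P -> B \in P -> A != B ->
  #|merge_blocks A B @: P| = #|P| - 1.
Proof.
move=> tI P0 PA PB nAB.
have /set0Pn[a Aa] : A != set0 by apply: contraNneq P0 => <-.
have -> : merge_blocks A B @: P = merge_blocks A B @: (P :\ A).
  apply/eqP; rewrite eqEsubset (imsetS _ (subD1set P A)) andbT.
  apply/subsetP=> _ /imsetP[C PC ->]; have [-> | nCA] := eqVneq C A.
    have -> : merge_blocks A B A = merge_blocks A B B by rewrite /merge_blocks !eqxx orbT.
    by rewrite imset_f // !inE eq_sym nAB.
  by rewrite imset_f // !inE nCA.
rewrite card_in_imset ?(cardsD1 A P) ?PA ?add1n ?subn1 //.
move=> C D /setD1P[nCA PC] /setD1P[nDA PD]; rewrite /merge_blocks (negbTE nCA) (negbTE nDA).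
have AB_in E : E \in P -> E != A -> A :|: B = E -> False.
  move=> PE nEA eE; have Ea : a \in E by rewrite -eE inE Aa.
  by case/eqP: nEA; rewrite -(def_pblock tI PE Ea) (def_pblock tI PA Aa).
by case: eqP => [-> | _]; case: eqP => [-> | _] //= eCD;
  [case: (AB_in D) | case: (AB_in C)].
Qed.

Lemma components_setU1 H x y :
  components ([set x; y] |: H) =
  merge_blocks (pblock (components H) x) (pblock (components H) y) @: components H.
Proof.
set P := components H; set g := merge_blocks _ _.
have gP z : pblock (components ([set x; y] |: H)) z = g (pblock P z).
  apply/setP=> w; rewrite mem_pblock_components /g /merge_blocks connect_adjF_setU1.
  rewrite !eq_pblock_components (connect_adjF_sym H z x) (connect_adjF_sym H z y).
  case: ifP => cz; last by rewrite andFb orbF mem_pblock_components.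
  rewrite inE !mem_pblock_components andTb.
  apply/idP/idP=> [/orP[czw|] //| ->]; last by rewrite orbT.
  by case/orP: cz => c; rewrite (connect_trans c czw) ?orbT.
rewrite (partition_pblockE (partition_components _)) /P.
rewrite [in RHS](partition_pblockE (partition_components H)) -imset_comp.
by apply: eq_imset => z; rewrite /= gP.
Qed.

Lemma card_components_setU1 H x y :
  ~~ connect (adjF H) x y -> #|components ([set x; y] |: H)| = #|components H| - 1.
Proof.
move=> nc; rewrite components_setU1; case/and3P: (partition_components H) => _ tI P0.
by rewrite card_merge_blocks ?pblock_components ?eq_pblock_components.
Qed.

Lemma connected_on_components1 F :
  #|components F| = 1 -> connected_on F [set: T].
Proof.
move=> /eqP/cards1P[S0 FS0] x y _ _.
have pbS0 z : pblock (components F) z = S0.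
  by apply/set1P; rewrite -FS0 pblock_components.
rewrite (@eq_connect _ _ (adjF F)); last by move=> u v; rewrite !in_setT.
by rewrite -mem_pblock_components pbS0 -(pbS0 y) mem_pblock mem_cover_components.
Qed.


Lemma exists_edge_across_components (e : rel T) F :
  graph_connected e -> 1 < #|components F| ->
  exists u v, e u v /\ ~~ connect (adjF F) u v.
Proof.
move=> ce /card_gt1P[S1 [S2 [FS1 FS2 nS12]]].
case/and3P: (partition_components F) => _ _ P0.
have /set0Pn[x S1x] : S1 != set0 by apply: contraNneq P0 => <-.
have /set0Pn[z S2z] : S2 != set0 by apply: contraNneq P0 => <-.
have nxz : ~~ connect (adjF F) x z.
  rewrite -eq_pblock_components.
  by rewrite -(components_pblockE FS1 S1x) -(components_pblockE FS2 S2z).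
have /connectP[p pxp zp] := ce x z.
have [|u [v [euv xu nxv]]] := path_exit (Q := connect (adjF F) x) pxp (connect0 _ x).
  by rewrite -zp.
by exists u, v; split=> //; apply: contra nxv => cuv; apply: connect_trans xu cuv.
Qed.


Lemma spanning_tree_extension (e : rel T) m H :
  simple_graph e -> graph_connected e -> acyclic H ->
  {in H, forall f, edge_in e [set: T] f} -> #|components H| = m.+1 ->
  exists R, [/\ [disjoint H & R], #|R| = m & spanning_tree e [set: T] (H :|: R)].
Proof.
move=> [_ irr_e] ce; elim: m H => [|m IHm] H acH eH cH.
  exists set0; rewrite cards0 setU0; split=> //; first by rewrite -setI_eq0 setI0.
  by split=> //; apply: connected_on_components1.
have [|u [v [euv ncuv]]] := exists_edge_across_components (F := H) ce.
  by rewrite cH.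
have nuv : u != v by apply: contraTneq euv => ->; rewrite irr_e.
have Hf : [set u; v] \notin H.
  by apply: contra ncuv => Hf; rewrite connect1 // /adjF nuv.
have ef : edge_in e [set: T] [set u; v] by apply/edge_inP; exists u, v; rewrite !in_setT.
have [|||R [dR cR stR]] := IHm ([set u; v] |: H).
- exact: acyclic_setU1.
- by move=> f /setU1P[-> | /eH].
- by rewrite card_components_setU1 // cH.
exists ([set u; v] |: R); rewrite setUCA setUA; split=> //.
  apply/pred0P=> g /=; have := pred0P dR g; rewrite /= !inE.
  by case: eqP => [-> | _]; rewrite ?(negbTE Hf) ?orbF.
by rewrite cardsU1 cR (disjointFr dR) ?setU11.
Qed.
End EdgeSets.

Section BalancedForests.
Variables (T : finType) (e : rel T).
Implicit Types (F H R : {set {set T}}) (P : {set {set T}}) (S : {set T}) (x y : T).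

Definition edges_within H S : {set {set T}} := [set f in H | f \subset S].

Definition spanning_trees S : {set {set {set T}}} := [set F | `[< spanning_tree e S F >]].

Definition forest_of P (g : {ffun {set T} -> {set {set T}}}) : {set {set T}} :=
  \bigcup_(S in P) g S.

Definition balanced_forest k H : Prop :=
  [/\ {in H, forall f, edge_in e [set: T] f},
      balanced_connected_partition e k (components H) &
      forall S, S \in components H -> spanning_tree e S (edges_within H S)].







Section ForestOfFamily.
Variables (P : {set {set T}}) (g : {ffun {set T} -> {set {set T}}}).
Hypothesis partP : partition P [set: T].
Hypothesis treeP : forall S, S \in P -> spanning_tree e S (g S).

Let tIP : trivIset P. Proof. by case/and3P: partP. Qed.
Let mem_coverP x : x \in cover P.
Proof. by case/and3P: partP => /eqP-> _ _; rewrite in_setT. Qed.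
Let mem_pblockP x : x \in pblock P x. Proof. by rewrite mem_pblock. Qed.

Lemma edges_within_forest_of S : S \in P -> edges_within (forest_of P g) S = g S.
Proof.
move=> PS; apply/setP=> f; rewrite !inE; apply/andP/idP=> [[/bigcupP[S' PS' fS'] fS] | fS].
  have [eS' _ _] := treeP PS'; have /edge_inP[x [y [S'x _ _ fxy]]] := eS' _ fS'.
  have Sx : x \in S by apply: (subsetP fS); rewrite fxy !inE eqxx.
  by rewrite -(def_pblock tIP PS Sx) (def_pblock tIP PS' S'x).
have [eS _ _] := treeP PS; split; first by apply/bigcupP; exists S.
exact: edge_in_subset (eS _ fS).
Qed.

Lemma components_forest_of : components (forest_of P g) = P.
Proof.
rewrite -[RHS](equivalence_partition_pblock partP).
congr equivalence_partition; apply: funext => x; apply: funext => y.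
apply/idP/idP=> [|Pxy].
  apply: (connect_invariant (Q := fun z => z \in pblock P x)); last exact: mem_pblockP.
  move=> u v /andP[nuv /bigcupP[S PS uvS]] Pu.
  have [eS _ _] := treeP PS.
  have /andP[Su Sv] : (u \in S) && (v \in S) by apply: adjF_edge_in eS _; rewrite /adjF nuv.
  by rewrite -(same_pblock tIP Pu) (def_pblock tIP PS Su).
have [_ cS _] := treeP (pblock_mem (mem_coverP x)).
apply: connect_sub (cS x y (mem_pblockP x) Pxy) => u v /and3P[_ _ /andP[nuv uvS]].
by rewrite connect1 // /adjF nuv; apply/bigcupP; exists (pblock P x); rewrite ?pblock_mem.
Qed.

End ForestOfFamily.

Notation tree_families P := (pfamily set0 P spanning_trees).

Lemma tree_familiesP P g :
  g \in tree_families P -> forall S, S \in P -> spanning_tree e S (g S).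
Proof. by case/pfamilyP=> _ gP S /gP; rewrite inE => /asboolP. Qed.

Lemma balanced_forestsE k P :
  balanced_connected_partition e k P ->
  [set H | `[< balanced_forest k H >] & components H == P] =
  forest_of P @: tree_families P.
Proof.
move=> bP; have [partP _ _ _] := bP.
apply/setP=> H; rewrite inE; apply/andP/imsetP=> [[/asboolP[eH _ tH] /eqP cHP] | [g gP ->]].
  exists [ffun S => if S \in P then edges_within H S else set0].
    apply/pfamilyP; split=> [|S PS].
      by apply/subsetP=> S; rewrite inE ffunE; case: ifP => // _; rewrite eqxx.
    by rewrite ffunE PS inE; apply/asboolP; apply: tH; rewrite cHP.
  apply/setP=> f; apply/idP/bigcupP=> [Hf | [S PS]]; last first.
    by rewrite ffunE PS inE => /andP[].
  have /edge_inP[x [y [_ _ _ fxy]]] := eH _ Hf.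
  exists (pblock P x); first by rewrite -cHP pblock_components.
  rewrite ffunE -cHP pblock_components inE Hf fxy pair_subset ?mem_pblock_components //.
  have [-> | nxy] := eqVneq x y; first exact: connect0.
  by rewrite connect1 // /adjF nxy -fxy.
have treeP := tree_familiesP gP; have cgP := components_forest_of partP treeP.
split; last by rewrite cgP.
apply/asboolP; rewrite /balanced_forest cgP; split=> // [f | S PS].
  case/bigcupP=> S PS gSf; have [eS _ _] := treeP S PS.
  exact: edge_in_trans (eS _ gSf) (subsetT f).
by rewrite edges_within_forest_of //; apply: treeP.
Qed.

Lemma card_balanced_forests k P :
  balanced_connected_partition e k P ->
  #|[set H | `[< balanced_forest k H >] & components H == P]| = \prod_(S in P) tau e S.
Proof.
move=> bP; have [partP _ _ _] := bP.
rewrite balanced_forestsE // card_in_imset; last first.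
  move=> g1 g2 g1P g2P eg; apply/ffunP=> S; have [PS | nPS] := boolP (S \in P).
    rewrite -(edges_within_forest_of partP (tree_familiesP g1P)) //.
    by rewrite eg edges_within_forest_of //; apply: tree_familiesP.
  have gS0 g : g \in tree_families P -> g S = set0.
    by case/pfamilyP=> /subsetP/(_ S) gP _; apply/eqP; apply: contraNT nPS => /gP.
  by rewrite !gS0.
by rewrite card_pfamily foldrE big_image.
Qed.

Lemma Bk_card_balanced_forests k :
  Bk e k = #|[set H | `[< balanced_forest k H >]]|.
Proof.
rewrite -sum1_card (partition_big (@components T)
  (fun P => `[< balanced_connected_partition e k P >])); last first.
  by move=> H; rewrite inE => /asboolP[_ bH _]; apply/asboolP.
apply: eq_bigr => P /asboolP bP; rewrite -(card_balanced_forests bP) sum1dep_card.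
by apply: eq_card => H; rewrite !inE.
Qed.
End BalancedForests.

Section Counting.
Variable T : finType.

Definition vertex_pairs : {set {set T}} := [set [set x; y] | x in [set: T], y in [set: T]].

Definition pair_sets m : {set {set {set T}}} :=
  [set R : {set {set T}} | (R \subset vertex_pairs) && (#|R| == m)].

Lemma edge_in_vertex_pairs (e : rel T) S f : edge_in e S f -> f \in vertex_pairs.
Proof. by case/edge_inP=> x [y [_ _ _ ->]]; apply/imset2P; exists x y. Qed.

Lemma ffact_leq_expn n m : n ^_ m <= n ^ m.
Proof. by elim: m => // m IHm; rewrite ffactnSr expnSr leq_mul ?leq_subr. Qed.

Lemma card_pair_sets m : #|pair_sets m| <= #|T| ^ (2 * m).
Proof.
rewrite cards_draws expnM.
have pairsT : #|vertex_pairs| <= #|T| ^ 2.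
  rewrite /vertex_pairs curry_imset2X (leq_trans (leq_imset_card _ _)) //.
  by rewrite cardsX cardsT mulnn.
have binE : 'C(#|vertex_pairs|, m) <= #|vertex_pairs| ^_ m.
  by rewrite -bin_ffact leq_pmulr ?fact_gt0.
apply: leq_trans binE (leq_trans (ffact_leq_expn _ _) _).
by case: m => // m; rewrite leq_exp2r.
Qed.
End Counting.

Section Splitting.
Variables (T : finType) (e : rel T).
Implicit Types (F H R : {set {set T}}) (S : {set T}).

Lemma acyclic_components H :
  (forall S, S \in components H -> acyclic (edges_within H S)) -> acyclic H.
Proof.
move=> acS [[|x s] [//= s3 us cs]]; set S := pblock (components H) x.
apply: (acS S (pblock_components H x)); exists (x :: s); split=> //.
have Ss : all (mem S) (x :: s).
  apply/allP=> z zs; rewrite inE /S mem_pblock_components; apply: (path_connect cs).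
  by rewrite in_cons mem_rcons zs orbT.
apply: sub_in_cycle Ss cs => u v Su Sv /andP[nuv Huv].
by rewrite /adjF nuv inE Huv (pair_subset Su Sv).
Qed.

Lemma balanced_forest_of_split k F R :
  spanning_tree e [set: T] F -> R \subset F -> #|components (F :\: R)| = k ->
  (forall A B, A \in components (F :\: R) -> B \in components (F :\: R) -> #|A| = #|B|) ->
  balanced_forest e k (F :\: R).
Proof.
move=> [eF _ acF] sRF cFR eqFR; set H := F :\: R.
have eH : {in H, forall f, edge_in e [set: T] f} by move=> f /setDP[/eF].
have cS S x y : S \in components H -> x \in S -> y \in S ->
    connect [rel u v | [&& u \in S, v \in S & adjF (edges_within H S) u v]] x y.
  move=> HS Sx Sy; rewrite (components_pblockE HS Sx) in Sy *.
  apply: (@connect_within _ _ H (pblock (components H) x)).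
  - move=> u v Su Sv /andP[nuv Huv].
    by rewrite /= Su Sv /adjF nuv inE Huv (pair_subset Su Sv).
  - by move=> z; rewrite mem_pblock_components.
  - by rewrite -mem_pblock_components.
split=> //; first split=> //.
- exact: partition_components.
- move=> S HS x y Sx Sy; apply: connect_sub (cS S x y HS Sx Sy).
  move=> u v /and3P[Su Sv /andP[nuv]].
  rewrite inE => /andP[Huv sS]; apply: connect1; rewrite /= Su Sv /adjF nuv inE.
  exact: edge_in_trans (eH _ Huv) sS.
- move=> S HS; split=> [f /setIdP[/eH /edge_in_trans] | x y | ]; first exact.
  + exact: cS.
  + by apply: acyclic_subset acF; apply/subsetP=> f /setIdP[/setDP[]].
Qed.
End Splitting.

Section Comparison.
Variables (T : finType) (e : rel T) (k : nat).

Let splittable_trees := [set F | `[< spanning_tree e [set: T] F /\ splittable k F >]].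
Let balanced_forests := [set H | `[< balanced_forest e k H >]].

Lemma splittable_trees_subset :
  splittable_trees \subset
  [set p.1 :|: p.2 | p in setX balanced_forests (pair_sets T (k - 1))].
Proof.
apply/subsetP=> F; rewrite inE => /asboolP[stF [R [sRF cR cFR eqFR]]].
have [eF _ _] := stF.
apply/imsetP; exists (F :\: R, R).
  rewrite !inE /= cR subn1 eqxx andbT; apply/andP; split.
    by apply/asboolP; apply: balanced_forest_of_split.
  by apply/subsetP=> f /(subsetP sRF) /eF /edge_in_vertex_pairs.
apply/setP=> f; rewrite /= !inE.
by have [/(subsetP sRF)-> | _] := boolP (f \in R); rewrite ?orbT ?orbF.
Qed.

Lemma balanced_forests_subset :
  simple_graph e -> graph_connected e -> 1 <= k ->
  balanced_forests \subset
  [set p.1 :\: p.2 | p in setX splittable_trees (pair_sets T (k - 1))].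
Proof.
move=> se ce k1; apply/subsetP=> H; rewrite inE => /asboolP[eH bH tH].
have acH : acyclic H by apply: acyclic_components => S /tH[].
have [_ cH _ eqH] := bH.
have [|R [dHR cR stHR]] := spanning_tree_extension (m := k - 1) se ce acH eH.
  by rewrite cH subn1 prednK.
apply/imsetP; exists (H :|: R, R); last by rewrite /= setDUl setDv setU0 (setDidPl dHR).
rewrite !inE /= cR eqxx andbT; apply/andP; split.
  apply/asboolP; split=> //; exists R; rewrite setDUl setDv setU0 (setDidPl dHR).
  by rewrite cR subn1 subsetUr; split.
have [eHR _ _] := stHR; apply/subsetP=> f Rf.
by apply: edge_in_vertex_pairs (eHR f _); rewrite inE Rf orbT.
Qed.
End Comparison.

Theorem mainTheorem9 (T : finType) (e : rel T) (k : nat) :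
  simple_graph e -> graph_connected e -> 0 < #|T| -> 1 <= k ->
  tauk e k <= #|T| ^ (2 * (k - 1)) * Bk e k /\
  Bk e k <= #|T| ^ (2 * (k - 1)) * tauk e k.
Proof.
move=> se ce _ k1; rewrite Bk_card_balanced_forests /tauk.
have pairsT := card_pair_sets T (k - 1).
split.
- apply: leq_trans (subset_leq_card (splittable_trees_subset e k)) _.
  by rewrite (leq_trans (leq_imset_card _ _)) // cardsX mulnC leq_mul.
- apply: leq_trans (subset_leq_card (balanced_forests_subset se ce k1)) _.
  by rewrite (leq_trans (leq_imset_card _ _)) // cardsX mulnC leq_mul.
Qed.
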